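(* Let $(W,S)$ be a Coxeter group, $\Gamma$ a totally ordered abelian group and $L:W\to\Gamma$ a weight function with $L(s)\ge 0$ for all $s\in S$, and let $P^\ast_{y,w}$, $\mu^s_{y,w}$ be as in the context. Let $\varepsilon:\Gamma\to\{\pm1\}$ be any group homomorphism, write $(-1)^\gamma:=\varepsilon(\gamma)$, and let $\theta$ be the ring automorphism of $\mathbb{Z}[\Gamma]$ with $\theta(v^\gamma)=(-1)^\gamma v^\gamma$. Then for all $y,w\in W$ and $s\in S$: (a) $\theta(P^\ast_{y,w})=(-1)^{L(w)+L(y)}P^\ast_{y,w}$; (b) $\theta(\mu^s_{y,w})=(-1)^{L(w)+L(y)+L(s)}\mu^s_{y,w}$. Consequently: (c) $P_{y,w}:=v^{L(w)-L(y)}P^\ast_{y,w}\in\mathbb{Z}[2\Gamma]$; (d) $v^{L(w)-L(y)}\,v_s\,\mu^s_{y,w}\in\mathbb{Z}[2\Gamma]$, where $\mathbb{Z}[2\Gamma]$ denotes the subring of $\mathbb{Z}[\Gamma]$ spanned by the $v^\gamma$ with $\gamma\in 2\Gamma$.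
   Context: $(W,S)$ is a Coxeter group with length function $l$ and Bruhat order $\le$. $\Gamma$ is a totally ordered abelian group; $\mathbb{Z}[\Gamma]$ is its group ring, with the basis element of $\gamma$ written $v^\gamma$ (so $v^{\gamma+\gamma'}=v^\gamma v^{\gamma'}$); $\Gamma_{>0}$, $\Gamma_{<0}$ denote the positive/negative elements and $\mathbb{Z}[\Gamma_{>0}]$ etc. the spans of the corresponding $v^\gamma$. A weight function is a map $L:S\to\Gamma$ with $L(s)=L(t)$ whenever $s,t$ are conjugate in $W$, extended to $W$ by $L(s_1\cdots s_n)=\sum L(s_i)$ for reduced expressions. Put $v_s:=v^{L(s)}$. The Hecke algebra $H=H(W,S,L)$ is the $\mathbb{Z}[\Gamma]$-algebra with basis $(T_w)_{w\in W}$, where $T_sT_w=T_{sw}$ if $l(sw)>l(w)$ and $T_s^2=1+(v_s-v_s^{-1})T_s$. Let $\overline{\phantom{x}}$ be the ring involution of $\mathbb{Z}[\Gamma]$ with $\overline{v^\gamma}=v^{-\gamma}$, extended to the ring automorphism $\sum a_wT_w\mapsto\sum\overline{a_w}\,T_{w^{-1}}^{-1}$ of $H$. The Kazhdan–Lusztig basis $(C_w)_{w\in W}$ is the unique $\mathbb{Z}[\Gamma]$-basis with $\overline{C_w}=C_w$ and $C_w\in T_w+\sum_{y}\mathbb{Z}[\Gamma_{>0}]T_y$. Define $P^\ast_{y,w}\in\mathbb{Z}[\Gamma]$ by $C_w=\sum_{y\in W}(-1)^{l(y)+l(w)}\overline{P^\ast_{y,w}}\,T_y$, and for $s\in S$ with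 $sw>w$ define $\mu^s_{y,w}\in\mathbb{Z}[\Gamma]$ by $C_sC_w=C_{sw}+\sum_{y<w}(-1)^{l(y)+l(w)+1}\mu^s_{y,w}C_y$; set $\mu^s_{y,w}:=0$ in all other cases (in particular $\mu^s_{y,w}\neq0$ only if $L(s)>0$ and $sy<y<w<sw$). *)

(* Since (W,S) may be infinite and Gamma is an arbitrary
   totally ordered abelian group, all objects are given "by their defining
   properties": each predicate below pins the object down uniquely (up to
   the evident isomorphism), exactly as in the paper's definitions. *)
From HB Require Import structures.
From mathcomp Require Import all_boot all_order all_algebra.

Set Implicit Arguments.
Unset Strict Implicit.
Unset Printing Implicit Defensive.

Import Order.TTheory GRing.Theory Num.Theory.
Local Open Scope ring_scope.

Definition wprod (W : groupType) (s : seq W) : W := (\prod_(x <- s) x)%g.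

(* (W,S) is a Coxeter system: S consists of involutions (<> 1) generating W,
   and W has the presentation < S | (st)^{m(s,t)} = 1 >, with m(s,t) the
   order of st in W (m(s,t) = infinity meaning no relation).  The
   presentation is expressed by its universal property: every map f from S
   to a group G that satisfies all these relations extends to a group
   homomorphism W -> G.  (Note (st)^n = 1 in W iff m(s,t) divides n.) *)
Definition coxeter_system (W : groupType) (S : pred W) : Prop :=
  [/\ (forall s, S s -> s <> 1%g /\ (s * s)%g = 1%g),
      (forall w, exists s : seq W, all S s /\ wprod s = w) &
      (forall (G : groupType) (f : W -> G),
         (forall s t n, S s -> S t -> ((s * t) ^+ n)%g = 1%g ->
                        ((f s * f t) ^+ n)%g = 1%g) ->
         exists phi : W -> G,
           (forall x y, phi (x * y)%g = (phi x * phi y)%g) /\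
           (forall s, S s -> phi s = f s))].

Definition length_fun (W : groupType) (S : pred W) (l : W -> nat) : Prop :=
  forall w,
    (exists s : seq W, [/\ all S s, wprod s = w & size s = l w]) /\
    (forall s : seq W, all S s -> wprod s = w -> (l w <= size s)%N).

Definition reduced (W : groupType) (S : pred W) (l : W -> nat) (s : seq W) :=
  all S s /\ size s = l (wprod s).

(* Bruhat order: y <= w iff y is a subexpression of a reduced expression
   of w (subword property). *)
Definition bruhat_le (W : groupType) (S : pred W) (l : W -> nat) (y w : W) :=
  exists s : seq W, [/\ reduced S l s, wprod s = w &
                        exists m : bitseq, wprod (mask m s) = y].

Definition bruhat_lt (W : groupType) (S : pred W) (l : W -> nat) (y w : W) :=
  bruhat_le S l y w /\ y <> w.

Definition tot_ord_group (G : porderZmodType) : Prop :=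
  (forall a b : G, (a <= b) || (b <= a)) /\
  (forall a b c : G, a <= b -> a + c <= b + c).

Definition weight_fun (W : groupType) (S : pred W) (l : W -> nat)
    (G : porderZmodType) (L : W -> G) : Prop :=
  (forall s t : W, S s -> S t -> (exists x : W, t = (s ^ x)%g) -> L s = L t) /\
  (forall s : seq W, reduced S l s -> L (wprod s) = \sum_(x <- s) L x).

Definition zcomb (G : zmodType) (A : pzRingType) (v : G -> A)
    (r : seq (G * int)) : A := \sum_(p <- r) v p.1 *~ p.2.

(* (A, v) is the group ring Z[Gamma], v g standing for v^g:
   v is a monoid morphism (Gamma, +) -> (A, mul) and (v g)_g is a Z-basis. *)
Definition group_ring (G : zmodType) (A : comNzRingType) (v : G -> A) : Prop :=
  [/\ v 0 = 1,
      (forall a b, v (a + b) = v a * v b),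
      (forall a : A, exists r, a = zcomb v r) &
      (forall r : seq (G * int), uniq (map fst r) -> zcomb v r = 0 ->
                                 forall p, p \in r -> p.2 = 0)].

Definition zspan (G : zmodType) (A : pzRingType) (v : G -> A) (P : G -> Prop)
    (a : A) : Prop :=
  exists r : seq (G * int), (forall p, p \in r -> P p.1) /\ a = zcomb v r.

Definition twice (G : zmodType) (g : G) : Prop := exists h : G, g = h + h.

(* bar : Z[Gamma] -> Z[Gamma] is the ring involution v^g |-> v^{-g}
   (it is determined by additivity and its values on the basis) *)
Definition bar_spec (G : zmodType) (A : pzRingType) (v : G -> A) (bar : A -> A) :=
  (forall a b, bar (a + b) = bar a + bar b) /\ (forall g, bar (v g) = v (- g)).

Definition sign_hom (G : zmodType) (eps : G -> int) : Prop :=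
  (forall g, eps g = 1 \/ eps g = -1) /\ (forall a b, eps (a + b) = eps a * eps b).

Definition theta_spec (G : zmodType) (A : pzRingType) (v : G -> A)
    (eps : G -> int) (theta : A -> A) :=
  (forall a b, theta (a + b) = theta a + theta b) /\
  (forall g, theta (v g) = v g *~ eps g).

(* H is an A-algebra with basis (T w)_w (tcoef h y being the T_y-coordinate
   of h), T_1 = 1, and the defining multiplication rules
   T_s T_w = T_{sw} if l(sw) > l(w), T_s^2 = 1 + (v_s - v_s^{-1}) T_s. *)
Definition hecke_algebra (W : groupType) (S : pred W) (l : W -> nat)
    (G : zmodType) (L : W -> G) (A : comNzRingType) (v : G -> A)
    (H : algType A) (T : W -> H) (tcoef : H -> W -> A) : Prop :=
  [/\ (forall (a : A) (h1 h2 : H) y,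
         tcoef (a *: h1 + h2) y = a * tcoef h1 y + tcoef h2 y),
      (forall w y, tcoef (T w) y = if w == y then 1 else 0),
      (forall h, exists ys : seq W, h = \sum_(y <- ys) tcoef h y *: T y) &
      [/\ T 1%g = 1,
      (forall s w, S s -> (l w < l (s * w)%g)%N -> T s * T w = T (s * w)%g) &
      (forall s, S s -> T s * T s = 1 + (v (L s) - v (- L s)) *: T s)]].

Definition tinv_spec (W : groupType) (A : comNzRingType) (H : algType A)
    (T : W -> H) (Tinv : W -> H) : Prop :=
  forall w, T w * Tinv w = 1 /\ Tinv w * T w = 1.

Definition barH_spec (W : groupType) (A : comNzRingType) (bar : A -> A)
    (H : algType A) (T Tinv : W -> H) (barH : H -> H) : Prop :=
  (forall h1 h2, barH (h1 + h2) = barH h1 + barH h2) /\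
  (forall (a : A) w, barH (a *: T w) = bar a *: Tinv (w^-1)%g).

Definition kl_basis (W : groupType) (G : porderZmodType) (A : comNzRingType)
    (v : G -> A) (H : algType A) (T : W -> H) (barH : H -> H) (C : W -> H) :=
  forall w, barH (C w) = C w /\
    exists r : seq (W * A),
      (forall p, p \in r -> zspan v (fun g => 0 < g) p.2) /\
      C w = T w + \sum_(p <- r) p.2 *: T p.1.

Definition pstar_spec (W : groupType) (l : W -> nat) (A : comNzRingType)
    (bar : A -> A) (H : algType A) (tcoef : H -> W -> A) (C : W -> H)
    (Pstar : W -> W -> A) : Prop :=
  forall y w, tcoef (C w) y = (-1) ^+ (l y + l w) * bar (Pstar y w).

(* mu s y w = mu^s_{y,w}:  for s in S with sw > w,
     C_s C_w = C_{sw} + sum_{y < w} (-1)^{l(y)+l(w)+1} mu^s_{y,w} C_y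
   (the sum is over the finite Bruhat interval below w, enumerated by ys),
   and mu^s_{y,w} = 0 in all other cases. *)
Definition mu_spec (W : groupType) (S : pred W) (l : W -> nat)
    (A : comNzRingType) (H : algType A) (C : W -> H)
    (mu : W -> W -> W -> A) : Prop :=
  (forall s w, S s -> (l w < l (s * w)%g)%N ->
     exists ys : seq W,
       [/\ uniq ys, (forall y, y \in ys <-> bruhat_lt S l y w) &
           C s * C w = C (s * w)%g +
             \sum_(y <- ys) ((-1) ^+ (l y + l w + 1) * mu s y w) *: C y]) /\
  (forall s y w, ~ (S s /\ (l w < l (s * w)%g)%N /\ bruhat_lt S l y w) ->
     mu s y w = 0).

(* Grade Z[Gamma] by Gamma/2Gamma and give T_y the parity of L(y).  Since
   v_s - v_s^-1 has parity L(s), left multiplication by T_s and by T_s^-1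
   preserves homogeneity, and so does the bar involution.  Split C_w - T_w
   into its parts of parity L(w) and of the other parities: the latter part is
   bar-invariant with coefficients in Z[Gamma_{>0}], hence zero, so C_w is
   homogeneous of parity L(w).  Thus P*_{y,w} lies in Z[L(w) + L(y) + 2Gamma];
   comparing parities in the formula for C_s C_w (the C_y being free) gives the
   same for mu^s_{y,w} with L(w) + L(y) + L(s).  On Z[c + 2Gamma], theta is the
   scalar (-1)^c, and multiplying by v^{L(w) - L(y)} (and v_s) lands in
   Z[2Gamma]. *)

From HB Require Import structures.
From mathcomp Require Import all_boot all_order all_algebra all_fingroup zify.
From Stdlib Require Import Classical ClassicalEpsilon.
Import Order.TTheory GRing.Theory Num.Theory.
Set Implicit Arguments.
Unset Strict Implicit.

Section Coxeter.
Variables (W : groupType) (S : pred W) (l : W -> nat).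
Hypothesis hcox : coxeter_system S.
Hypothesis hlen : length_fun S l.

Lemma wprod_nil : wprod [::] = 1%g :> W.
Proof. by rewrite /wprod big_nil. Qed.

Lemma wprod_cons (s : W) u : wprod (s :: u) = (s * wprod u)%g.
Proof. by rewrite /wprod big_cons. Qed.

Lemma wprod_rcons (u : seq W) s : wprod (rcons u s) = (wprod u * s)%g.
Proof. by rewrite /wprod -cats1 big_cat big_seq1. Qed.

Lemma mulss s : S s -> (s * s = 1)%g.
Proof. by case: hcox => h _ _ /h []. Qed.

Lemma invgS s : S s -> (s^-1 = s)%g.
Proof. by move=> /mulss ss; rewrite -[LHS]mulg1 -ss mulKg. Qed.

Lemma mulKs s x : S s -> (s * (s * x) = x)%g.
Proof. by move=> /mulss ss; rewrite mulgA ss mul1g. Qed.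

Lemma length_le_word u : all S u -> (l (wprod u) <= size u)%N.
Proof. by move=> au; case: (hlen (wprod u)) => _; apply. Qed.

Lemma exists_reduced x : exists2 u, reduced S l u & wprod u = x.
Proof. by have [[u [au <- su]] _] := hlen x; exists u. Qed.

Lemma length1 : l 1%g = 0%N.
Proof. by apply/eqP; rewrite -leqn0 -wprod_nil length_le_word. Qed.

Lemma length_mulS_le s x : S s -> (l (s * x)%g <= (l x).+1)%N.
Proof.
move=> Ss; have [u [au su] <-] := exists_reduced x.
by rewrite -su -wprod_cons length_le_word //= Ss.
Qed.

(* The sign character W -> {+1,-1}, obtained from the universal property of
   the Coxeter presentation, reads off the parity of the length. *)
Lemma odd_length_mulS s x : S s -> odd (l (s * x)%g) = ~~ odd (l x).
Proof.
move=> Ss; case: hcox => _ _ /(_ _ (fun _ : W => tperm (ord0 : 'I_2) ord_max)) [].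
  by move=> s' t n _ _ _; rewrite tperm2 expg1n.
move=> phi [phiM phiS].
have phi1 : phi 1%g = 1%g by apply: (mulgI (phi 1%g)); rewrite -phiM !mulg1.
have odd_phi u : all S u -> odd_perm (phi (wprod u)) = odd (size u).
  elim: u => [|y u IH] /=; first by rewrite wprod_nil phi1 odd_perm1.
  by move=> /andP [Sy au]; rewrite wprod_cons phiM odd_permM IH // phiS // odd_tperm.
have [u [au su] eu] := exists_reduced x.
have [u' [au' su'] eu'] := exists_reduced (s * x)%g.
rewrite -eu' -eu -su -su' -!odd_phi // eu' eu phiM odd_permM phiS // odd_tperm.
by case: (odd_perm _).
Qed.

Lemma length_mulS s x : S s ->
  l (s * x)%g = (l x).+1 \/ l x = (l (s * x)%g).+1.
Proof.
move=> Ss; have le1 := length_mulS_le x Ss.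
have le2 := length_mulS_le (s * x)%g Ss; rewrite mulKs // in le2.
have odd_sx := odd_length_mulS x Ss.
case: (ltngtP (l (s * x)%g) (l x)) => lt.
- by right; apply/eqP; rewrite eqn_leq le2 lt.
- by left; apply/eqP; rewrite eqn_leq le1 lt.
- by move: odd_sx; rewrite lt; case: (odd _).
Qed.

Lemma wprod_rev u : all S u -> wprod (rev u) = (wprod u)^-1%g.
Proof.
elim: u => [|s u IH] /=; first by rewrite wprod_nil invg1.
by move=> /andP [Ss au]; rewrite rev_cons wprod_rcons wprod_cons IH // invgM (invgS Ss).
Qed.

Lemma length_inv x : l x^-1%g = l x.
Proof.
suff le y : (l y^-1%g <= l y)%N.
  by apply/eqP; rewrite eqn_leq le /=; have := le x^-1%g; rewrite invgK.
have [u [au su] <-] := exists_reduced y.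
by rewrite -su -size_rev -wprod_rev // length_le_word // all_rev.
Qed.

Lemma reduced_rev u : reduced S l u -> reduced S l (rev u).
Proof. by move=> [au su]; split; rewrite ?all_rev // wprod_rev // length_inv size_rev. Qed.

Lemma reduced_behead s u : reduced S l (s :: u) ->
  reduced S l u /\ (l (wprod u) < l (s * wprod u)%g)%N.
Proof.
move=> [/= /andP [Ss au]]; rewrite wprod_cons => su.
have le_u := length_le_word au; have := length_mulS_le (wprod u) Ss.
rewrite -su ltnS => ge_u.
by split; [split=> //; apply/eqP; rewrite eqn_leq ge_u le_u|rewrite ltnS].
Qed.

Lemma reduced_cons s x : S s -> (l x < l (s * x)%g)%N ->
  exists u, [/\ reduced S l (s :: u), reduced S l u & wprod u = x].
Proof.
move=> Ss lt_x; have [u [au su] eu] := exists_reduced x; exists u.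
split=> //; split; first by rewrite /= Ss.
rewrite wprod_cons /= su eu; case: (length_mulS x Ss) => [-> //|e].
by move: lt_x; rewrite e ltnNge leqnSn.
Qed.
End Coxeter.

Local Open Scope ring_scope.

Section Additive.
Variables (U V : zmodType) (f : U -> V).
Hypothesis fD : forall a b, f (a + b) = f a + f b.

Lemma additive0 : f 0 = 0.
Proof. by apply: (addIr (f 0)); rewrite -fD !add0r. Qed.

Lemma additiveN a : f (- a) = - f a.
Proof. by apply: (addIr (f a)); rewrite -fD !addNr additive0. Qed.

Lemma additiveMz a n : f (a *~ n) = f a *~ n.
Proof.
have fMn m : f (a *+ m) = f a *+ m.
  by elim: m => [|m IH]; rewrite ?mulr0n ?additive0 // !mulrS fD IH.
by case: n => n; rewrite ?NegzE ?mulrNz ?additiveN /= fMn.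
Qed.

Lemma additive_sum (I : Type) (r : seq I) (F : I -> U) :
  f (\sum_(i <- r) F i) = \sum_(i <- r) f (F i).
Proof. by elim: r => [|i r IH]; rewrite ?big_nil ?additive0 // !big_cons fD IH. Qed.
End Additive.

Section GroupRing.
Variables (G : zmodType) (A : comNzRingType) (v : G -> A).

Lemma zcomb_nil : zcomb v [::] = 0.
Proof. by rewrite /zcomb big_nil. Qed.

Lemma zcomb_cons p r : zcomb v (p :: r) = v p.1 *~ p.2 + zcomb v r.
Proof. by rewrite /zcomb big_cons. Qed.

Lemma zcomb_cat r1 r2 : zcomb v (r1 ++ r2) = zcomb v r1 + zcomb v r2.
Proof. by rewrite /zcomb big_cat. Qed.

Lemma zcomb_mulrz r n :
  zcomb v r *~ n = zcomb v [seq (p.1, p.2 * n) | p <- r].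
Proof.
elim: r => [|p r IH]; first by rewrite zcomb_nil mul0rz.
by rewrite /= !zcomb_cons mulrzDl IH mulrzA.
Qed.

Lemma zcomb_eq0 r : (forall p, p \in r -> p.2 = 0) -> zcomb v r = 0.
Proof. by move=> r0; rewrite /zcomb big_seq big1 // => p /r0 ->. Qed.

Lemma zspan0 P : zspan v P 0.
Proof. by exists [::]; rewrite zcomb_nil. Qed.

Lemma zspanD P a b : zspan v P a -> zspan v P b -> zspan v P (a + b).
Proof.
move=> [r1 [P1 ->]] [r2 [P2 ->]]; exists (r1 ++ r2); rewrite zcomb_cat.
by split=> // p; rewrite mem_cat => /orP [/P1|/P2].
Qed.

Lemma zspanMz P a n : zspan v P a -> zspan v P (a *~ n).
Proof.
move=> [r [Pr ->]]; exists [seq (p.1, p.2 * n) | p <- r].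
by rewrite zcomb_mulrz; split=> // p /mapP [q /Pr Pq ->].
Qed.

Lemma zspanN P a : zspan v P a -> zspan v P (- a).
Proof. by rewrite -mulrN1z; apply: zspanMz. Qed.

Lemma zspanB P a b : zspan v P a -> zspan v P b -> zspan v P (a - b).
Proof. by move=> Pa Pb; apply/zspanD/zspanN. Qed.

Lemma zspan_sum P (I : eqType) (r : seq I) (F : I -> A) :
  (forall i, i \in r -> zspan v P (F i)) -> zspan v P (\sum_(i <- r) F i).
Proof.
elim: r => [|i r IH] PF; first by rewrite big_nil; apply: zspan0.
rewrite big_cons; apply: zspanD; first by apply: PF; rewrite mem_head.
by apply: IH => j jr; apply: PF; rewrite inE jr orbT.
Qed.

Lemma zspan_sign P k a : zspan v P a -> zspan v P ((-1) ^+ k * a).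
Proof. by rewrite -signr_odd mulr_sign; case: ifP => // _; apply: zspanN. Qed.

Lemma zspan_mono (P Q : G -> Prop) a :
  (forall g, P g -> Q g) -> zspan v P a -> zspan v Q a.
Proof. by move=> PQ [r [Pr ->]]; exists r; split=> // p /Pr /PQ. Qed.

Lemma zspan_vMz (P : G -> Prop) g n : P g -> zspan v P (v g *~ n).
Proof.
move=> Pg; exists [:: (g, n)]; rewrite zcomb_cons zcomb_nil addr0.
by split=> // p; rewrite inE => /eqP ->.
Qed.

Lemma zspan_v (P : G -> Prop) g : P g -> zspan v P (v g).
Proof. by rewrite -[v g]mulr1z; apply: zspan_vMz. Qed.

Lemma zspan_split (P X : G -> Prop) a : zspan v P a ->
  exists a1 a2, [/\ a = a1 + a2, zspan v (fun g => P g /\ X g) a1 &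
                    zspan v (fun g => P g /\ ~ X g) a2].
Proof.
move=> [r [Pr ->]]; elim: r Pr => [|p r IH] Pr.
  by exists 0, 0; rewrite zcomb_nil addr0; split=> //; apply: zspan0.
rewrite zcomb_cons; have [|a1 [a2 [-> X1 X2]]] := IH.
  by move=> q qr; apply: Pr; rewrite inE qr orbT.
have Pp : P p.1 by apply: Pr; rewrite mem_head.
case: (classic (X p.1)) => Xp.
  by exists (v p.1 *~ p.2 + a1), a2; rewrite addrA; split=> //; apply/zspanD/X1/zspan_vMz.
by exists a1, (v p.1 *~ p.2 + a2); rewrite addrCA; split=> //; apply/zspanD/X2/zspan_vMz.
Qed.

Lemma zspan_uniq_comb (P : G -> Prop) a : zspan v P a ->
  exists r, [/\ uniq (map fst r), (forall p, p \in r -> P p.1) & a = zcomb v r].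
Proof.
move=> [r [Pr ->]]; elim: r Pr => [|p r IH] Pr; first by exists [::].
rewrite zcomb_cons; have [|r0 [u0 P0 ->]] := IH.
  by move=> q qr; apply: Pr; rewrite inE qr orbT.
have Pp : P p.1 by apply: Pr; rewrite mem_head.
pose m := \sum_(q <- r0 | q.1 == p.1) q.2.
exists ((p.1, p.2 + m) :: [seq q <- r0 | q.1 != p.1]); split.
- rewrite /= (_ : map fst _ = [seq g <- map fst r0 | g != p.1]); last by rewrite filter_map.
  by rewrite filter_uniq // andbT mem_filter eqxx.
- by move=> q; rewrite inE mem_filter => /orP [/eqP -> //|/andP [_ /P0]].
- rewrite zcomb_cons /= /zcomb big_filter [in LHS](bigID (fun q => q.1 == p.1)) /=.
  rewrite addrA mulrzDr mulrz_sumr; congr (_ + _ + _).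
  by apply: eq_bigr => q /eqP ->.
Qed.

Lemma zspan_split_fun (I : Type) (P X : I -> G -> Prop) (f : I -> A) :
  (forall i, zspan v (P i) (f i)) ->
  exists fX fN : I -> A, forall i,
    [/\ f i = fX i + fN i, zspan v (fun g => P i g /\ X i g) (fX i) &
        zspan v (fun g => P i g /\ ~ X i g) (fN i)].
Proof.
move=> Pf; have [fXN fXNP] : exists fXN : I -> A * A, forall i,
    [/\ f i = (fXN i).1 + (fXN i).2, zspan v (fun g => P i g /\ X i g) (fXN i).1 &
        zspan v (fun g => P i g /\ ~ X i g) (fXN i).2].
  apply: (choice (fun i (p : A * A) => [/\ f i = p.1 + p.2,
    zspan v (fun g => P i g /\ X i g) p.1 & zspan v (fun g => P i g /\ ~ X i g) p.2])) => i.
  by have [a1 [a2 []]] := zspan_split (X i) (Pf i); exists (a1, a2).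
by exists (fun i => (fXN i).1), (fun i => (fXN i).2).
Qed.

Hypothesis hv : group_ring v.

Lemma zspanT a : zspan v (fun _ => True) a.
Proof. by case: hv => _ _ /(_ a) [r ->] _; exists r. Qed.

Lemma zspan_disjoint (P Q : G -> Prop) a : (forall g, P g -> Q g -> False) ->
  zspan v P a -> zspan v Q a -> a = 0.
Proof.
move=> PQ /zspan_uniq_comb [r1 [u1 P1 e1]] /zspan_uniq_comb [r2 [u2 Q2 e2]].
case: hv => _ _ _ indep.
pose r := r1 ++ [seq (p.1, p.2 * -1) | p <- r2].
have r0 : zcomb v r = 0 by rewrite zcomb_cat -zcomb_mulrz -e1 -e2 mulrN1z subrr.
have ur : uniq (map fst r).
  rewrite map_cat -map_comp (@eq_map _ _ _ fst) // cat_uniq u1 u2 andbT.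
  apply/hasPn => g /mapP [p pr ->]; apply/negP => /mapP [q qr epq].
  by apply: (PQ p.1); [rewrite epq; apply: P1|apply: Q2].
by rewrite e1; apply: zcomb_eq0 => p pr; apply: (indep _ ur r0); rewrite mem_cat pr.
Qed.

Lemma zspanM (P Q R : G -> Prop) a b :
  (forall g h, P g -> Q h -> R (g + h)) ->
  zspan v P a -> zspan v Q b -> zspan v R (a * b).
Proof.
move=> PQR [r1 [P1 ->]] [r2 [Q2 ->]]; case: hv => _ vD _ _.
rewrite /zcomb big_distrl /=; apply: zspan_sum => p pr.
rewrite big_distrr /=; apply: zspan_sum => q qr.
by rewrite mulrzAl mulrzAr -vD; apply/zspanMz/zspanMz/zspan_v/PQR; [apply: P1|apply: Q2].
Qed.

Lemma zspan_vM (P : G -> Prop) g a :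
  zspan v P a -> zspan v (fun h => P (h - g)) (v g * a).
Proof.
apply: (@zspanM (fun h => h = g)); last by apply: zspan_v.
by move=> _ h -> Ph; rewrite addrC addKr.
Qed.
End GroupRing.

Section Parity.
Variable G : zmodType.
Implicit Types c d g : G.

Lemma twiceD c d : twice c -> twice d -> twice (c + d).
Proof. by move=> [x ->] [y ->]; exists (x + y); rewrite addrACA. Qed.

Lemma twiceN c : twice c -> twice (- c).
Proof. by move=> [x ->]; exists (- x); rewrite opprD. Qed.

Lemma twice_double c : twice (c + c).
Proof. by exists c. Qed.

Lemma twice_subDD c d : twice ((c - d) + (c + d)).
Proof. by rewrite (addrC c d) addrA subrK; apply: twice_double. Qed.

Lemma twice_shift c c' d : twice (c' - c) -> twice ((c' + d) - (c + d)).
Proof. by rewrite opprD addrACA subrr addr0. Qed.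

Definition eqmod2 c g := twice (g - c).

Lemma eqmod2_double c : eqmod2 (c + c) 0.
Proof. by rewrite /eqmod2 sub0r; apply/twiceN/twice_double. Qed.

Lemma eqmod2_add c d g g' : eqmod2 c g -> eqmod2 d g' -> eqmod2 (c + d) (g + g').
Proof. by move=> cg dg'; rewrite /eqmod2 opprD addrACA; apply: twiceD. Qed.

Lemma eqmod2_shift c c' g : twice (c' - c) -> eqmod2 c g -> eqmod2 c' g.
Proof. by move=> cc' cg; have := twiceD cg (twiceN cc'); rewrite opprB addrA subrK. Qed.

Lemma eqmod2_opp c g : eqmod2 c g -> eqmod2 c (- g).
Proof.
move=> cg; have := twiceD (twiceN cg) (twiceN (twice_double c)).
by rewrite /eqmod2 opprB opprD addrA addrC -(addrA c) addKr.
Qed.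

(* What is needed of a predicate [Q c g] on parities c and degrees g for the
   Hecke algebra operations to preserve it; both [eqmod2] and its negation
   qualify, so the parts of right and of wrong parity are treated at once. *)
Definition parity_class (Q : G -> G -> Prop) :=
  [/\ forall c d g g', Q c g -> eqmod2 d g' -> Q (c + d) (g + g'),
      forall c c' g, twice (c' - c) -> Q c g -> Q c' g &
      forall c g, Q c g -> Q c (- g)].

Lemma eqmod2_class : parity_class eqmod2.
Proof. by split; [apply: eqmod2_add|apply: eqmod2_shift|apply: eqmod2_opp]. Qed.

Lemma neqmod2_class : parity_class (fun c g => ~ eqmod2 c g).
Proof.
split.
- move=> c d g g' ncg dg' cdg; apply: ncg.
  have := eqmod2_add cdg (eqmod2_opp dg').
  rewrite addrK; apply: eqmod2_shift.
  by rewrite -addrA opprD addrA subrr add0r; apply/twiceN/twice_double.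
- move=> c c' g cc' ncg c'g; apply: ncg; apply: eqmod2_shift c'g.
  by rewrite -opprB; apply: twiceN.
- by move=> c g ncg cg; apply: ncg; rewrite -[g]opprK; apply: eqmod2_opp.
Qed.
End Parity.
Arguments eqmod2 {G}.
Arguments eqmod2_class {G}.
Arguments neqmod2_class {G}.

Section Bar.
Variables (G : zmodType) (A : comNzRingType) (v : G -> A) (bar : A -> A).
Hypothesis hv : group_ring v.
Hypothesis hbar : bar_spec v bar.

Lemma barD a b : bar (a + b) = bar a + bar b.
Proof. by case: hbar. Qed.

Lemma bar_v g : bar (v g) = v (- g).
Proof. by case: hbar. Qed.

Lemma bar0 : bar 0 = 0.
Proof. exact: additive0 barD. Qed.

Lemma bar1 : bar 1 = 1.
Proof. by case: hv => v0 _ _ _; rewrite -v0 bar_v oppr0. Qed.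

Lemma bar_sign k a : bar ((-1) ^+ k * a) = (-1) ^+ k * bar a.
Proof. by rewrite -signr_odd !mulr_sign; case: ifP => // _; rewrite (additiveN barD). Qed.

Lemma barK a : bar (bar a) = a.
Proof.
case: hv => _ _ /(_ a) [r ->] _; rewrite /zcomb !(additive_sum barD).
by apply: eq_bigr => p _; rewrite !(additiveMz barD) !bar_v opprK.
Qed.

Lemma zspan_bar P a : zspan v P a -> zspan v (fun g => P (- g)) (bar a).
Proof.
move=> [r [Pr ->]]; rewrite /zcomb (additive_sum barD); apply: zspan_sum => p pr.
by rewrite (additiveMz barD) bar_v; apply: zspan_vMz; rewrite opprK; apply: Pr.
Qed.

Lemma zspan_bar_eqmod2 c a : zspan v (eqmod2 c) a -> zspan v (eqmod2 c) (bar a).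
Proof. by move=> /zspan_bar; apply: zspan_mono => g /eqmod2_opp; rewrite opprK. Qed.
End Bar.

Lemma theta_eqmod2 (G : zmodType) (A : comNzRingType) (v : G -> A)
    (eps : G -> int) (theta : A -> A) c a :
  sign_hom eps -> theta_spec v eps theta ->
  zspan v (eqmod2 c) a -> theta a = a *~ eps c.
Proof.
move=> [eps_pm epsD] [thetaD theta_v] [r [Pr ->]].
rewrite /zcomb (additive_sum thetaD) mulrz_suml big_seq [RHS]big_seq.
apply: eq_bigr => p /Pr [h eh]; rewrite (additiveMz thetaD) theta_v.
have -> : p.1 = c + (h + h) by rewrite -eh addrC subrK.
have -> : eps (c + (h + h)) = eps c.
  by rewrite !epsD; case: (eps_pm h) => ->; rewrite ?mulrNN !mulr1.
by rewrite mulrzAC.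
Qed.

Section Hecke.
Variables (W : groupType) (S : pred W) (l : W -> nat) (G : porderZmodType)
  (L : W -> G) (A : comNzRingType) (v : G -> A) (bar : A -> A) (H : algType A)
  (T Tinv : W -> H) (tcoef : H -> W -> A) (barH : H -> H).
Hypothesis hcox : coxeter_system S.
Hypothesis hlen : length_fun S l.
Hypothesis hw : weight_fun S l L.
Hypothesis hv : group_ring v.
Hypothesis hbar : bar_spec v bar.
Hypothesis hH : hecke_algebra S l L v T tcoef.
Hypothesis htinv : tinv_spec T Tinv.
Hypothesis hbarH : barH_spec bar T Tinv barH.

Lemma tcoefD h1 h2 y : tcoef (h1 + h2) y = tcoef h1 y + tcoef h2 y.
Proof. by case: hH => lin _ _ _; rewrite -{1}[h1]scale1r lin mul1r. Qed.

Lemma tcoef0 y : tcoef 0 y = 0.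
Proof. exact: (additive0 (fun h1 h2 => tcoefD h1 h2 y)). Qed.

Lemma tcoefN h y : tcoef (- h) y = - tcoef h y.
Proof. exact: (additiveN (fun h1 h2 => tcoefD h1 h2 y)). Qed.

Lemma tcoefB h1 h2 y : tcoef (h1 - h2) y = tcoef h1 y - tcoef h2 y.
Proof. by rewrite tcoefD tcoefN. Qed.

Lemma tcoefZ a h y : tcoef (a *: h) y = a * tcoef h y.
Proof. by case: hH => lin _ _ _; rewrite -[a *: h]addr0 lin tcoef0 addr0. Qed.

Lemma tcoef_sum (I : Type) (r : seq I) (F : I -> H) y :
  tcoef (\sum_(i <- r) F i) y = \sum_(i <- r) tcoef (F i) y.
Proof. exact: (additive_sum (fun h1 h2 => tcoefD h1 h2 y)). Qed.

Lemma tcoefT w y : tcoef (T w) y = if w == y then 1 else 0.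
Proof. by case: hH => _ tT _ _; apply: tT. Qed.

Lemma tcoef_sumT (ys : seq W) (c : W -> A) z : uniq ys ->
  tcoef (\sum_(y <- ys) c y *: T y) z = if z \in ys then c z else 0.
Proof.
move=> uys; rewrite tcoef_sum; under eq_bigr => y _ do rewrite tcoefZ tcoefT.
case: ifP => [zys|zNys].
  rewrite (bigD1_seq z) //= eqxx mulr1 big1 ?addr0 // => y /negbTE.
  by rewrite eq_sym => ->; rewrite mulr0.
rewrite big_seq big1 // => y yys; case: eqP => [eyz|]; last by rewrite mulr0.
by rewrite -eyz yys in zNys.
Qed.

Lemma heckeP h h' : (forall y, tcoef h y = tcoef h' y) -> h = h'.
Proof.
move=> eh; apply/eqP; rewrite -subr_eq0; apply/eqP.
case: hH => _ _ /(_ (h - h')) [ys ->] _.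
by rewrite big1 // => y _; rewrite tcoefB eh subrr scale0r.
Qed.

Lemma tcoef_expansion h : exists ys : seq W,
  [/\ uniq ys, (forall y, y \notin ys -> tcoef h y = 0) &
      h = \sum_(y <- ys) tcoef h y *: T y].
Proof.
case: hH => _ _ /(_ h) [ys eh] _.
have supp_ys y : y \notin ys -> tcoef h y = 0.
  move=> yNys; rewrite eh tcoef_sum big_seq big1 // => z zys.
  rewrite tcoefZ tcoefT; case: eqP => [ezy|]; last by rewrite mulr0.
  by rewrite -ezy zys in yNys.
exists (undup ys); split; first exact: undup_uniq.
  by move=> y; rewrite mem_undup; apply: supp_ys.
apply: heckeP => z; rewrite tcoef_sumT ?undup_uniq // mem_undup.
by case: ifP => // /negbT /supp_ys.
Qed.

Definition vdiff s := v (L s) - v (- L s).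

Lemma T1 : T 1%g = 1.
Proof. by case: hH => _ _ _ []. Qed.

Lemma T_mulS_up s y : S s -> (l y < l (s * y)%g)%N -> T s * T y = T (s * y)%g.
Proof. by case: hH => _ _ _ [_ up _]; apply: up. Qed.

Lemma T_sq s : S s -> T s * T s = 1 + vdiff s *: T s.
Proof. by case: hH => _ _ _ [_ _ sq]; apply: sq. Qed.

Lemma T_mulS_down s y : S s -> (l (s * y)%g < l y)%N ->
  T s * T y = T (s * y)%g + vdiff s *: T y.
Proof.
move=> Ss lt_y.
have eTy : T y = T s * T (s * y)%g by rewrite T_mulS_up // (mulKs hcox).
by rewrite {1}eTy mulrA T_sq // mulrDl mul1r -scalerAl -eTy.
Qed.

Lemma Tinv_S s : S s -> Tinv s = T s - vdiff s *: 1.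
Proof.
move=> Ss; have [_ Tinv_sK] := htinv s.
have Ts_inv : T s * (T s - vdiff s *: 1) = 1.
  by rewrite mulrBr -scalerAr mulr1 T_sq // addrK.
by rewrite -[LHS]mulr1 -[X in Tinv s * X]Ts_inv mulrA Tinv_sK mul1r.
Qed.

Lemma weight_reduced u : reduced S l u -> L (wprod u) = \sum_(x <- u) L x.
Proof. by case: hw => _; apply. Qed.

Lemma weight_cons s u : reduced S l (s :: u) -> L (s * wprod u)%g = L s + L (wprod u).
Proof.
move=> red_su; have [red_u _] := reduced_behead hlen red_su.
by rewrite -wprod_cons !weight_reduced // big_cons.
Qed.

Lemma weight_mulS_up s y : S s -> (l y < l (s * y)%g)%N -> L (s * y)%g = L s + L y.
Proof.
by move=> Ss lt_y; have [u [red_su _ <-]] := reduced_cons hcox hlen Ss lt_y; apply: weight_cons.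
Qed.

Lemma weight1 : L 1%g = 0.
Proof.
by rewrite -(wprod_nil W) weight_reduced ?big_nil //; split; rewrite //= wprod_nil (length1 hlen).
Qed.

Lemma T_reduced u : reduced S l u -> T (wprod u) = \prod_(x <- u) T x.
Proof.
elim: u => [|s u IH] red_su; first by rewrite wprod_nil big_nil T1.
have [red_u lt_u] := reduced_behead hlen red_su; have [/= /andP [Ss _] _] := red_su.
by rewrite wprod_cons -T_mulS_up // IH // big_cons.
Qed.

Lemma Tinv_reduced u : reduced S l u -> Tinv (wprod u)^-1%g = \prod_(x <- u) Tinv x.
Proof.
move=> red_u; have [au _] := red_u.
have prod_TTinv : (\prod_(x <- rev u) T x) * (\prod_(x <- u) Tinv x) = 1.
  elim: u au {red_u} => [|s u IH] /=; first by rewrite !big_nil mulr1.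
  move=> /andP [Ss au]; rewrite rev_cons -cats1 big_cat big_seq1 big_cons.
  by have [TTinv _] := htinv s; rewrite -mulrA (mulrA (T s)) TTinv mul1r IH.
have eT : T (wprod u)^-1%g = \prod_(x <- rev u) T x.
  by rewrite -(wprod_rev hcox) // T_reduced //; apply: (reduced_rev hcox hlen).
have [_ TinvT] := htinv (wprod u)^-1%g.
by rewrite -[LHS]mulr1 -[X in _ * X]prod_TTinv mulrA -eT TinvT mul1r.
Qed.

(* For [Q := eqmod2]: h is homogeneous of parity c, T_y having degree L y. *)
Definition tclass (Q : G -> G -> Prop) c h :=
  forall y, zspan v (Q (c + L y)) (tcoef h y).

Lemma vdiff_eqmod2 s : zspan v (eqmod2 (L s)) (vdiff s).
Proof.
apply: zspanB; apply: zspan_v; rewrite /eqmod2 ?subrr -?opprD.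
  by exists 0; rewrite addr0.
by apply/twiceN/twice_double.
Qed.

Lemma tclassD Q c h1 h2 : tclass Q c h1 -> tclass Q c h2 -> tclass Q c (h1 + h2).
Proof. by move=> Q1 Q2 y; rewrite tcoefD; apply: zspanD. Qed.

Lemma tclassB Q c h1 h2 : tclass Q c h1 -> tclass Q c h2 -> tclass Q c (h1 - h2).
Proof. by move=> Q1 Q2 y; rewrite tcoefB; apply: zspanB. Qed.

Lemma tclass_sum Q c (I : Type) (r : seq I) (F : I -> H) :
  (forall i, tclass Q c (F i)) -> tclass Q c (\sum_(i <- r) F i).
Proof.
move=> QF y; rewrite tcoef_sum; elim: r => [|i r IH]; first by rewrite big_nil; apply: zspan0.
by rewrite big_cons; apply: zspanD => //; apply: QF.
Qed.

Lemma tclass_scaleT Q c y a : zspan v (Q (c + L y)) a -> tclass Q c (a *: T y).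
Proof.
move=> Qa z; rewrite tcoefZ tcoefT; case: eqP => [<-|_]; first by rewrite mulr1.
by rewrite mulr0; apply: zspan0.
Qed.

Section TClass.
Variable Q : G -> G -> Prop.
Hypothesis hQ : parity_class Q.

Lemma tclass_shift c c' h : twice (c' - c) -> tclass Q c h -> tclass Q c' h.
Proof.
case: hQ => _ Qshift _ cc' Qh y; apply: zspan_mono (Qh y) => g.
by apply: Qshift; apply: twice_shift.
Qed.

Lemma tclass_scale c e a h : zspan v (eqmod2 e) a -> tclass Q c h -> tclass Q (c + e) (a *: h).
Proof.
case: hQ => Qadd _ _ ea Qh y; rewrite tcoefZ.
apply: (zspanM hv _ ea (Qh y)) => g g' eg Qg'.
by rewrite addrAC (addrC g); apply: Qadd.
Qed.

(* When sy < y, the term T_sy has weight L y - L s, which has the parity of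
   L y + L s. *)
Lemma tclass_mulTS c s h : S s -> tclass Q c h -> tclass Q (c + L s) (T s * h).
Proof.
case: hQ => Qadd Qshift _ Ss Qh; have [ys [_ _ ->]] := tcoef_expansion h.
rewrite mulr_sumr; apply: tclass_sum => y; rewrite -scalerAr.
case: (length_mulS hcox hlen y Ss) => [up|down].
  rewrite T_mulS_up ?up //; apply: tclass_scaleT; apply: zspan_mono (Qh y) => g.
  apply: Qshift; rewrite weight_mulS_up ?up // (addrC (L s)) addrACA.
  by rewrite [X in twice X]addrC addKr; apply: twice_double.
have eLy : L y = L s + L (s * y)%g.
  by rewrite -{1}(mulKs hcox y Ss) weight_mulS_up // (mulKs hcox y Ss) down.
rewrite T_mulS_down ?down // scalerDr scalerA; apply: tclassD.
  by apply: tclass_scaleT; rewrite -addrA -eLy.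
apply: tclass_scaleT; apply: (zspanM hv _ (Qh y) (vdiff_eqmod2 s)) => g g' Qg eg'.
by rewrite addrAC; apply: Qadd.
Qed.

Lemma tclass_mulT c x h : tclass Q c h -> tclass Q (c + L x) (T x * h).
Proof.
have [u red_u <-] := exists_reduced hlen x; elim: u c h red_u => [|s u IH] c h red_su Qh.
  by rewrite wprod_nil weight1 addr0 T1 mul1r.
have [red_u lt_u] := reduced_behead hlen red_su; have [/= /andP [Ss _] _] := red_su.
rewrite wprod_cons -T_mulS_up // -mulrA weight_cons // (addrC (L s)) addrA.
by apply: tclass_mulTS => //; apply: IH.
Qed.

Lemma tclass_mulTinvS c s h : S s -> tclass Q c h -> tclass Q (c + L s) (Tinv s * h).
Proof.
move=> Ss Qh; rewrite Tinv_S // mulrBl -scalerAl mul1r.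
by apply: tclassB; [apply: tclass_mulTS|apply/tclass_scale/Qh/vdiff_eqmod2].
Qed.

Lemma tclass_mulTinv c u h : reduced S l u -> tclass Q c h ->
  tclass Q (c + L (wprod u)) ((\prod_(x <- u) Tinv x) * h).
Proof.
elim: u c h => [|s u IH] c h red_su Qh.
  by rewrite wprod_nil weight1 addr0 big_nil mul1r.
have [red_u _] := reduced_behead hlen red_su; have [/= /andP [Ss _] _] := red_su.
rewrite big_cons wprod_cons -mulrA weight_cons // (addrC (L s)) addrA.
by apply: tclass_mulTinvS => //; apply: IH.
Qed.

Lemma tclass_mul c d h1 h2 : tclass eqmod2 c h1 -> tclass Q d h2 ->
  tclass Q (c + d) (h1 * h2).
Proof.
move=> ch1 Qh2; have [ys [_ _ ->]] := tcoef_expansion h1.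
rewrite mulr_suml; apply: tclass_sum => y; rewrite -scalerAl.
apply: (@tclass_shift (d + L y + (c + L y))).
  rewrite addrACA (addrC d) opprD addrA subrr add0r.
  by apply/twiceN/twice_double.
by apply: tclass_scale (ch1 y) _; apply: tclass_mulT.
Qed.
End TClass.

Lemma T_eqmod2 x : tclass eqmod2 (L x) (T x).
Proof.
move=> y; rewrite tcoefT; case: eqP => [<-|_]; last by apply: zspan0.
by case: hv => <- _ _ _; apply/zspan_v/eqmod2_double.
Qed.

Lemma Tinv_eqmod2 x : tclass eqmod2 (L x) (Tinv x^-1%g).
Proof.
have [u red_u <-] := exists_reduced hlen x; rewrite Tinv_reduced //.
have := T_eqmod2 1%g; rewrite T1 weight1 => e1.
by have := tclass_mulTinv eqmod2_class red_u e1; rewrite mulr1 add0r.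
Qed.

Lemma barHD h1 h2 : barH (h1 + h2) = barH h1 + barH h2.
Proof. by case: hbarH. Qed.

Lemma barH_scaleT a w : barH (a *: T w) = bar a *: Tinv w^-1%g.
Proof. by case: hbarH => _; apply. Qed.

Section TClassBar.
Variable Q : G -> G -> Prop.
Hypothesis hQ : parity_class Q.

Lemma tclass_scale_class c e a h : zspan v (Q e) a -> tclass eqmod2 c h ->
  tclass Q (c + e) (a *: h).
Proof.
case: hQ => Qadd _ _ Qa ch y; rewrite tcoefZ.
apply: (zspanM hv _ Qa (ch y)) => g g' Qg eg'.
by rewrite addrAC addrC; apply: Qadd.
Qed.

Lemma tclass_barH c h : tclass Q c h -> tclass Q c (barH h).
Proof.
case: hQ => _ _ Qopp Qh; have [ys [_ _ ->]] := tcoef_expansion h.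
rewrite (additive_sum barHD); apply: tclass_sum => y; rewrite barH_scaleT.
apply: (tclass_shift hQ (c := L y + (c + L y))).
  by rewrite addrCA opprD addrA subrr add0r; apply/twiceN/twice_double.
apply: tclass_scale_class; last exact: Tinv_eqmod2.
by apply: zspan_mono (zspan_bar hbar (Qh y)) => g /Qopp; rewrite opprK.
Qed.
End TClassBar.

Definition below n h := forall y, (n <= l y)%N -> tcoef h y = 0.

Lemma belowD n h1 h2 : below n h1 -> below n h2 -> below n (h1 + h2).
Proof. by move=> b1 b2 y ly; rewrite tcoefD b1 // b2 // addr0. Qed.

Lemma belowZ n a h : below n h -> below n (a *: h).
Proof. by move=> bh y ly; rewrite tcoefZ bh // mulr0. Qed.

Lemma belowB n h1 h2 : below n h1 -> below n h2 -> below n (h1 - h2).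
Proof. by move=> b1 b2 y ly; rewrite tcoefB b1 // b2 // subr0. Qed.

Lemma belowT n x : (l x < n)%N -> below n (T x).
Proof. by move=> lx y ly; rewrite tcoefT; case: eqP => // exy; rewrite -exy leqNgt lx in ly. Qed.

Lemma below_mulTS n s h : S s -> below n h -> below n.+1 (T s * h).
Proof.
move=> Ss bh; have [ys [_ _ ->]] := tcoef_expansion h.
rewrite mulr_sumr; apply: (big_ind (below n.+1)) => [z _|//|y _]; first by rewrite tcoef0.
  exact: belowD.
rewrite -scalerAr; have [hy0|hyN0] := eqVneq (tcoef h y) 0.
  by rewrite hy0 scale0r => z _; rewrite tcoef0.
have ly : (l y < n)%N by rewrite ltnNge; apply: contra hyN0 => /bh ->.
apply: belowZ; case: (length_mulS hcox hlen y Ss) => [up|down].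
  by rewrite T_mulS_up ?up //; apply: belowT; lia.
by rewrite T_mulS_down ?down //; apply: belowD; [|apply: belowZ]; apply: belowT; lia.
Qed.

Lemma below_mulTinvS n s h : S s -> below n h -> below n.+1 (Tinv s * h).
Proof.
move=> Ss bh; rewrite Tinv_S // mulrBl -scalerAl mul1r.
by apply: belowB; [apply: below_mulTS|apply: belowZ => y /ltnW; apply: bh].
Qed.

Lemma Tinv_reduced_below u : reduced S l u ->
  below (l (wprod u)) (\prod_(x <- u) Tinv x - T (wprod u)).
Proof.
elim: u => [|s u IH] red_su.
  by rewrite big_nil wprod_nil T1 subrr => y _; rewrite tcoef0.
have [red_u lt_u] := reduced_behead hlen red_su; have [/= /andP [Ss _] lsu] := red_su.
have [_ lu] := red_u.
have -> : \prod_(x <- s :: u) Tinv x - T (wprod (s :: u)) =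
    Tinv s * (\prod_(x <- u) Tinv x - T (wprod u)) - vdiff s *: T (wprod u).
  rewrite big_cons mulrBr Tinv_S // [X in _ - X - _]mulrBl -scalerAl mul1r.
  by rewrite T_mulS_up // -wprod_cons opprB !addrA addrAC addrK.
by rewrite -lsu /= lu; apply: belowB; [apply/below_mulTinvS/IH|apply/belowZ/belowT].
Qed.

Lemma tcoef_Tinv x y : (l x <= l y)%N -> tcoef (Tinv x^-1%g) y = tcoef (T x) y.
Proof.
have [u red_u <-] := exists_reduced hlen x => ly; rewrite Tinv_reduced //.
by apply/eqP; rewrite -subr_eq0 -tcoefB; apply/eqP; apply: Tinv_reduced_below.
Qed.

Lemma barH_fixed_top h z : barH h = h ->
  (forall y, tcoef h y != 0 -> (l y <= l z)%N) -> bar (tcoef h z) = tcoef h z.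
Proof.
move=> hbarh top; have [ys [uys supp_ys eh]] := tcoef_expansion h.
rewrite -[in RHS]hbarh [in RHS]eh (additive_sum barHD) tcoef_sum.
under eq_bigr => y _ do rewrite barH_scaleT tcoefZ.
transitivity (tcoef (\sum_(y <- ys) bar (tcoef h y) *: T y) z).
  by rewrite tcoef_sumT //; case: ifP => // /negbT /supp_ys ->; apply: bar0 hbar.
rewrite tcoef_sum; apply: eq_bigr => y _; rewrite tcoefZ.
have [->|hyN0] := eqVneq (tcoef h y) 0; first by rewrite (bar0 hbar) !mul0r.
by rewrite tcoef_Tinv // top.
Qed.

Hypothesis htot : tot_ord_group G.

Lemma bar_fixed_pos_eq0 a : zspan v (fun g => 0 < g) a -> bar a = a -> a = 0.
Proof.
move=> pos_a bar_a; apply: (zspan_disjoint hv (P := fun g => 0 < g) (Q := fun g => 0 < - g)) => //.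
  move=> g gt0 Ngt0; case: htot => _ addle.
  have := addle 0 (- g) g (ltW Ngt0); rewrite add0r addNr => le_g0.
  by have := lt_le_trans gt0 le_g0; rewrite ltxx.
by rewrite -bar_a; exact: (zspan_bar hbar (P := fun g => 0 < g) pos_a).
Qed.

Lemma seq_argmax (f : W -> nat) (s : seq W) : s != [::] ->
  exists2 z, z \in s & forall y, y \in s -> (f y <= f z)%N.
Proof.
elim: s => [//|x s IH] _; have [->|sN0] := eqVneq s [::].
  by exists x; rewrite ?mem_head // => y; rewrite inE => /eqP ->.
have [z zs zmax] := IH sN0; have [le_zx|lt_xz] := leqP (f z) (f x).
  exists x; rewrite ?mem_head // => y; rewrite inE => /orP [/eqP -> //|/zmax].
  by move/leq_trans; apply.
exists z; rewrite ?inE ?zs ?orbT // => y; rewrite inE => /orP [/eqP ->|/zmax //].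
exact: ltnW.
Qed.

Lemma tcoef_top h : (forall y, tcoef h y = 0) \/
  exists z, tcoef h z != 0 /\ forall y, tcoef h y != 0 -> (l y <= l z)%N.
Proof.
have [ys [_ supp_ys _]] := tcoef_expansion h.
have [supp0|suppN0] := eqVneq [seq y <- ys | tcoef h y != 0] [::].
  left=> y; apply/eqP; apply: contraT => hyN0.
  have yys : y \in ys by apply: contraR hyN0 => /supp_ys ->.
  have : y \in [seq y <- ys | tcoef h y != 0] by rewrite mem_filter hyN0.
  by rewrite supp0.
right; have [z] := seq_argmax l suppN0; rewrite mem_filter => /andP [hzN0 _] zmax.
exists z; split=> // y hyN0; apply: zmax; rewrite mem_filter hyN0.
by apply: contraR hyN0 => /supp_ys ->.
Qed.

Lemma barH_fixed_pos_eq0 h : barH h = h ->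
  (forall y, zspan v (fun g => 0 < g) (tcoef h y)) -> h = 0.
Proof.
move=> hbarh pos_h; case: (tcoef_top h) => [h0|[z [hzN0 top]]].
  by apply: heckeP => y; rewrite h0 tcoef0.
by move: hzN0; rewrite (bar_fixed_pos_eq0 (pos_h z)) ?eqxx ?barH_fixed_top.
Qed.

Lemma tclass_eqmod2_disjoint c h :
  tclass eqmod2 c h -> tclass (fun c g => ~ eqmod2 c g) c h -> h = 0.
Proof.
move=> even odd; apply: heckeP => y; rewrite tcoef0.
by apply: (zspan_disjoint hv _ (even y) (odd y)) => g.
Qed.

Variable C : W -> H.
Hypothesis hkl : kl_basis v T barH C.

Lemma C_bar w : barH (C w) = C w.
Proof. by case: (hkl w). Qed.

Lemma C_subT_pos w y : zspan v (fun g => 0 < g) (tcoef (C w - T w) y).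
Proof.
have [_ [r [pos_r ->]]] := hkl w; rewrite addrAC subrr add0r tcoef_sum.
apply: zspan_sum => p pr; rewrite tcoefZ tcoefT.
by case: eqP => _; rewrite ?mulr1 ?mulr0; [apply: pos_r|apply: zspan0].
Qed.

Lemma tcoef_C_long w z : (l w <= l z)%N -> tcoef (C w) z = tcoef (T w) z.
Proof.
have splitC y : tcoef (C w) y = tcoef (T w) y + tcoef (C w - T w) y.
  by rewrite tcoefB addrC subrK.
have supp_w y : tcoef (C w) y != 0 -> (l y <= l w)%N.
  case: (tcoef_top (C w)) => [C0|[x [CxN0 top]]]; first by rewrite C0 eqxx.
  have [exw|wNx] := eqVneq w x; first by subst x; apply: top.
  have := barH_fixed_top (C_bar w) top; rewrite splitC tcoefT (negbTE wNx) add0r.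
  move/(bar_fixed_pos_eq0 (C_subT_pos w x)) => q0.
  by move: CxN0; rewrite splitC tcoefT (negbTE wNx) q0 addr0 eqxx.
move=> lz; suff q0 : tcoef (C w - T w) z = 0 by rewrite splitC q0 addr0.
apply: (bar_fixed_pos_eq0 (C_subT_pos w z)); apply: (@addrI _ (tcoef (T w) z)).
have := barH_fixed_top (C_bar w) (fun y Cy => leq_trans (supp_w y Cy) lz).
rewrite splitC (barD hbar) => <-; congr (_ + _).
by rewrite tcoefT; case: eqP; rewrite ?(bar1 hv hbar) ?(bar0 hbar).
Qed.

Lemma C_free (ys : seq W) (b : W -> A) : uniq ys ->
  \sum_(y <- ys) b y *: C y = 0 -> forall y, y \in ys -> b y = 0.
Proof.
move=> uys sum0; have [supp0|suppN0] := eqVneq [seq y <- ys | b y != 0] [::].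
  move=> y yys; apply/eqP; apply: contraT => byN0.
  have : y \in [seq y <- ys | b y != 0] by rewrite mem_filter byN0.
  by rewrite supp0.
have [z] := seq_argmax l suppN0; rewrite mem_filter => /andP [bzN0 zys] zmax.
suff : tcoef (\sum_(y <- ys) b y *: C y) z = b z.
  by rewrite sum0 tcoef0 => bz0; rewrite -bz0 eqxx in bzN0.
transitivity (tcoef (\sum_(y <- ys) b y *: T y) z); last by rewrite tcoef_sumT // zys.
rewrite !tcoef_sum; apply: eq_big_seq => y yys.
rewrite !tcoefZ; have [->|byN0] := eqVneq (b y) 0; first by rewrite !mul0r.
by rewrite tcoef_C_long // zmax // mem_filter byN0.
Qed.

Lemma C_eqmod2 w : tclass eqmod2 (L w) (C w).
Proof.
have [qK [qN qKN]] := zspan_split_fun (fun y => eqmod2 (L w + L y)) (C_subT_pos w).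
have [ys [uys supp_ys _]] := tcoef_expansion (C w - T w).
pose hK := T w + \sum_(y <- ys) qK y *: T y.
pose hN := \sum_(y <- ys) qN y *: T y.
have eC : C w = hK + hN.
  apply: heckeP => y; rewrite !tcoefD !tcoef_sumT // -addrA.
  rewrite -[LHS](subrK (tcoef (T w) y)) addrC -tcoefB; congr (_ + _).
  by case: ifP => [_|/negbT /supp_ys ->]; [case: (qKN y)|rewrite addr0].
have hK_even : tclass eqmod2 (L w) hK.
  apply: tclassD; first exact: T_eqmod2.
  apply: tclass_sum => y.
  by apply: tclass_scaleT; case: (qKN y) => _ qKy _; apply: zspan_mono qKy => g [].
have hN_odd : tclass (fun c g => ~ eqmod2 c g) (L w) hN.
  apply: tclass_sum => y.
  by apply: tclass_scaleT; case: (qKN y) => _ _ qNy; apply: zspan_mono qNy => g [].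
have hN_bar : barH hN - hN = 0.
  apply: (tclass_eqmod2_disjoint (c := L w)).
    have -> : barH hN - hN = hK - barH hK.
      apply: (addIr (barH hK + hN)); rewrite addrACA addNr addr0 -barHD.
      by rewrite (addrC hN) -eC C_bar eC addrA subrK.
    exact: tclassB hK_even (tclass_barH eqmod2_class hK_even).
  exact: tclassB (tclass_barH neqmod2_class hN_odd) hN_odd.
suff hN0 : hN = 0 by rewrite eC hN0 addr0.
apply: barH_fixed_pos_eq0; first by apply/eqP; rewrite -subr_eq0 hN_bar.
move=> y; rewrite tcoef_sumT //; case: ifP => _; last by apply: zspan0.
by case: (qKN y) => _ _ qNy; apply: zspan_mono qNy => g [].
Qed.

Lemma Pstar_eqmod2 Pstar y w : pstar_spec l bar tcoef C Pstar ->
  zspan v (eqmod2 (L w + L y)) (Pstar y w).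
Proof.
move=> hP; have -> : Pstar y w = (-1) ^+ (l y + l w) * bar (tcoef (C w) y).
  by rewrite hP (bar_sign hbar) (barK hv hbar) signrMK.
by apply/zspan_sign/(zspan_bar_eqmod2 hbar)/C_eqmod2.
Qed.

Lemma mu_eqmod2 mu s y w : mu_spec S l C mu ->
  zspan v (eqmod2 (L w + L y + L s)) (mu s y w).
Proof.
move=> [mu_rule mu0].
case: (classic (S s /\ (l w < l (s * w)%g)%N /\ bruhat_lt S l y w));
  last by move=> nc; rewrite mu0 //; apply: zspan0.
move=> [Ss [lt_w lt_yw]]; have [ys [uys ys_lt eCC]] := mu_rule s w Ss lt_w.
pose m z := (-1) ^+ (l z + l w + 1) * mu s z w.
have [mK [mN mKN]] := zspan_split_fun (fun z => eqmod2 (L w + L z + L s))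
  (fun z => zspanT hv (m z)).
have shift z : twice ((L s + L w) - (L z + (L w + L z + L s))).
  have -> : L z + (L w + L z + L s) = L s + L w + (L z + L z).
    by rewrite addrA addrCA addrAC (addrC (L w)).
  by rewrite opprD addrA subrr add0r; apply/twiceN/twice_double.
pose XN := \sum_(z <- ys) mN z *: C z.
have XN_odd : tclass (fun c g => ~ eqmod2 c g) (L s + L w) XN.
  apply: tclass_sum => z; apply: (tclass_shift neqmod2_class (shift z)).
  apply: (tclass_scale_class neqmod2_class); last exact: C_eqmod2.
  by case: (mKN z) => _ _ mNz; apply: zspan_mono mNz => g [].
have XN_even : tclass eqmod2 (L s + L w) XN.
  have -> : XN = C s * C w - C (s * w)%g - \sum_(z <- ys) mK z *: C z.
    rewrite eCC [C (s * w)%g + _]addrC addrK -sumrB; apply: eq_bigr => z _.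
    by case: (mKN z) => e _ _; rewrite -scalerBl -/(m z) e [_ + mN z]addrC addrK.
  apply: tclassB.
    apply: tclassB; first by apply: (tclass_mul eqmod2_class); apply: C_eqmod2.
    by rewrite -weight_mulS_up //; apply: C_eqmod2.
  apply: tclass_sum => z; apply: (tclass_shift eqmod2_class (shift z)).
  apply: (tclass_scale_class eqmod2_class); last exact: C_eqmod2.
  by case: (mKN z) => _ mKz _; apply: zspan_mono mKz => g [].
have mNy0 := C_free uys (tclass_eqmod2_disjoint XN_even XN_odd) (proj2 (ys_lt y) lt_yw).
rewrite -[mu s y w](signrMK (l y + l w + 1)); apply: zspan_sign.
case: (mKN y) => e mKy _; rewrite -/(m y) e mNy0 addr0.
by apply: zspan_mono mKy => g [].
Qed.
End Hecke.

Lemma zspan_twice_vM (G : zmodType) (A : comNzRingType) (v : G -> A) c d a :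
  group_ring v -> twice (d + c) -> zspan v (eqmod2 c) a -> zspan v (@twice G) (v d * a).
Proof.
move=> hv dc /(zspan_vM hv d); apply: zspan_mono => g gdc.
by have := twiceD gdc dc; rewrite -[g - d - c]addrA -opprD subrK.
Qed.

Theorem mainTheorem1
  (W : groupType) (S : pred W) (l : W -> nat)
  (G : porderZmodType) (L : W -> G)
  (A : comNzRingType) (v : G -> A) (bar : A -> A)
  (eps : G -> int) (theta : A -> A)
  (H : algType A) (T Tinv : W -> H) (tcoef : H -> W -> A) (barH : H -> H)
  (C : W -> H) (Pstar : W -> W -> A) (mu : W -> W -> W -> A) :
  coxeter_system S ->
  length_fun S l ->
  tot_ord_group G ->
  weight_fun S l L ->
  (forall s, S s -> 0 <= L s) ->
  group_ring v ->
  bar_spec v bar ->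
  hecke_algebra S l L v T tcoef ->
  tinv_spec T Tinv ->
  barH_spec bar T Tinv barH ->
  kl_basis v T barH C ->
  pstar_spec l bar tcoef C Pstar ->
  mu_spec S l C mu ->
  sign_hom eps ->
  theta_spec v eps theta ->
  [/\ (forall y w, theta (Pstar y w) = Pstar y w *~ eps (L w + L y)),
      (forall s y w, S s ->
         theta (mu s y w) = mu s y w *~ eps (L w + L y + L s)),
      (forall y w, zspan v (@twice G) (v (L w - L y) * Pstar y w)) &
      (forall s y w, S s ->
         zspan v (@twice G) (v (L w - L y) * v (L s) * mu s y w))].
Proof.
move=> hcox hlen htot hw _ hv hbar hH htinv hbarH hkl hP hmu heps htheta.
have Pstar_par y w := Pstar_eqmod2 hcox hlen hw hv hbar hH htinv hbarH htot hkl y w hP.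
have mu_par s y w := mu_eqmod2 hcox hlen hw hv hbar hH htinv hbarH htot hkl s y w hmu.
split=> [y w|s y w _|y w|s y w _].
- exact: theta_eqmod2 heps htheta (Pstar_par y w).
- exact: theta_eqmod2 heps htheta (mu_par s y w).
- exact: zspan_twice_vM hv (twice_subDD _ _) (Pstar_par y w).
- have [_ vD _ _] := hv; rewrite -vD; apply: zspan_twice_vM hv _ (mu_par s y w).
  by rewrite addrACA; apply: twiceD (twice_subDD _ _) (twice_double _).
Qed.
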